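(* Let $A$ be a nonnegative random variable with a probability density function on $[0,\infty)$ and $\mathbf{E}[A]=1$, and fix $\beta\ge 0$. For $\rho>0$ define $$R(\rho)=\mathbf{E}\left[\log \frac{(\rho+1)^2\left[(1+\beta)A\rho+1\right]}{(\beta+1)\rho^2+(\beta A+2)\rho+1}\right],\qquad \bar C(\rho)=\mathbf{E}\left[\log(1+A\rho)\right].$$ Then $\lim_{\rho\to\infty}\left(\bar C(\rho)-R(\rho)\right)=0$ and $\lim_{\rho\to 0^+} R(\rho)/\bar C(\rho)=1$.
   Context: Interpretation: this concerns the channel $Y=\sqrt{A}(X+S)+Z$ with $Z\sim\mathcal{CN}(0,N)$, interference $S\sim\mathcal{CN}(0,Q)$ known noncausally to the encoder only, i.i.d. (ergodic) fading $A$ independent of $S$ known to the decoder only, input power $P$, SNR $\rho=P/N$ and interference-to-power ratio $\beta=Q/P$. $R(\rho)=I(U;Y|A)-I(U;S)$ is the rate of the dirty paper coding scheme with $X\sim\mathcal{CN}(0,P)$ independent of $S$ and auxiliary $U=X+\alpha S$, $\alpha=\rho/(1+\rho)$; $\bar C(\rho)$ is the capacity when the decoder also knows $S$. Logarithms are natural. *)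

From HB Require Import structures.
From mathcomp Require Import all_boot all_order all_algebra.
From mathcomp Require Import all_classical all_reals all_analysis.
Set Implicit Arguments. Unset Strict Implicit. Unset Printing Implicit Defensive.
Import Order.TTheory GRing.Theory Num.Theory.
Import numFieldNormedType.Exports.
Local Open Scope classical_set_scope.
Local Open Scope ring_scope.

Definition has_pdf d (T : measurableType d) (R : realType) (P : probability T R)
  (X : {RV P >-> R}) : Prop :=
  exists f : R -> R, (forall x, 0 <= f x) /\ measurable_fun setT f /\
    forall B : set R, measurable B ->
      distribution P X B = (\int[lebesgue_measure]_(x in B) (f x)%:E)%E.

Definition dpc_rate d (T : measurableType d) (R : realType) (P : probability T R)
  (A : T -> R) (beta rho : R) : R :=
  fine ('E_P[fun t => ln ((rho + 1) ^+ 2 * ((1 + beta) * A t * rho + 1) /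
        ((beta + 1) * rho ^+ 2 + (beta * A t + 2) * rho + 1))])%E.

Definition cap_known d (T : measurableType d) (R : realType) (P : probability T R)
  (A : T -> R) (rho : R) : R :=
  fine ('E_P[fun t => ln (1 + A t * rho)])%E.

From HB Require Import structures.
From mathcomp Require Import all_boot all_order all_algebra.
From mathcomp Require Import all_classical all_reals all_analysis.
From mathcomp Require Import measurable_realfun lra ring.
Import Order.TTheory GRing.Theory Num.Theory.
Import numFieldNormedType.Exports.
Local Open Scope classical_set_scope.
Local Open Scope ring_scope.

(* Pointwise in the fading value x, the integrand of Cbar exceeds that of R by
   ln (1 + Q) with Q = beta rho^2 (1 - x)^2 / num >= 0, since
   (1 + x rho) den - num = beta rho^2 (1 - x)^2.  Q is at most beta (1 + x),
   is O(1/rho) for x > 0 as rho -> oo and O(rho^2) as rho -> 0, while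
   ln (1 + x rho) / rho -> x.  A density makes A > 0 almost surely, and
   E[A] = 1 makes beta (1 + A) an integrable majorant, so dominated convergence
   gives Cbar - R = E[ln (1 + Q)] -> 0 at infinity and Cbar / rho -> 1,
   R / rho -> 1 at 0. *)

Section ln1Dx_bounds.
Context {R : realType}.

Lemma ln1Dx_ge (y : R) : 0 <= y -> y - y ^+ 2 <= ln (1 + y).
Proof.
move=> y0; have y1 : 0 < 1 + y by lra.
have lnV_ge : 1 - (1 + y)^-1 <= ln (1 + y).
  have : ln (1 + ((1 + y)^-1 - 1)) <= (1 + y)^-1 - 1.
    apply: le_ln1Dx; have : 0 < (1 + y)^-1 by rewrite invr_gt0.
    lra.
  by rewrite addrC subrK lnV ?posrE //; lra.
apply: le_trans lnV_ge.
have -> : 1 - (1 + y)^-1 = y / (1 + y) by field; rewrite gt_eqF.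
rewrite ler_pdivlMr // -subr_ge0.
have -> : y - (y - y ^+ 2) * (1 + y) = y ^+ 3 by ring.
exact: exprn_ge0.
Qed.

Lemma ln1Dx_norm_le {r x : R} : 0 < r -> 0 <= x -> `|ln (1 + x * r)| <= r * (1 + x).
Proof.
move=> r0 x0; have xr0 : 0 <= x * r by rewrite mulr_ge0 // ltW.
rewrite ger0_norm ?ln_ge0; try lra.
apply: le_trans (le_ln1Dx _) _; first lra.
by rewrite mulrC; apply: ler_wpM2l; [exact: ltW | lra].
Qed.

Lemma ln1Dx_div_norm_le {r x : R} : 0 < r -> 0 <= x -> `|ln (1 + x * r) / r| <= 1 + x.
Proof.
move=> r0 x0.
have r_inv0 : 0 < r^-1 by rewrite invr_gt0.
rewrite normrM (gtr0_norm r_inv0) ler_pdivrMr // [(1 + x) * r]mulrC.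
exact: ln1Dx_norm_le.
Qed.

End ln1Dx_bounds.

Section dpc_loss_def.
Context {R : realType}.
Implicit Types b r x : R.

Definition dpc_num b r x : R := (r + 1) ^+ 2 * ((1 + b) * x * r + 1).
Definition dpc_den b r x : R := (b + 1) * r ^+ 2 + (b * x + 2) * r + 1.
(* The gap between the integrands of cap_known and dpc_rate (see ln_dpc_ratio),
   written with logarithms of polynomials in x so that it is plainly measurable. *)
Definition dpc_loss b r x : R :=
  ln (1 + x * r) + ln (dpc_den b r x) - ln (dpc_num b r x).
Definition dpc_excess b r x : R := b * r ^+ 2 * (1 - x) ^+ 2 / dpc_num b r x.

End dpc_loss_def.

Section dpc_loss.
Context {R : realType}.

Lemma dpc_num_ge1 {b r x : R} : 0 <= b -> 0 < r -> 0 <= x -> 1 <= dpc_num b r x.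
Proof.
move=> b0 r0 x0.
have sq1 : 1 <= (r + 1) ^+ 2 by rewrite -[1](expr1n R 2) lerXn2r ?nnegrE; lra.
have K1 : 1 <= (1 + b) * x * r + 1.
  have : 0 <= (1 + b) * x * r by rewrite !mulr_ge0 ?addr_ge0 ?(ltW r0).
  lra.
by have := ler_pM ler01 ler01 sq1 K1; rewrite mul1r.
Qed.

Lemma dpc_num_gt0 {b r x : R} : 0 <= b -> 0 < r -> 0 <= x -> 0 < dpc_num b r x.
Proof. by move=> b0 r0 x0; apply: lt_le_trans ltr01 (dpc_num_ge1 b0 r0 x0). Qed.

Lemma dpc_den_gt0 {b r x : R} : 0 <= b -> 0 < r -> 0 <= x -> 0 < dpc_den b r x.
Proof.
move=> b0 r0 x0; rewrite /dpc_den.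
have bx : 0 <= b * x by rewrite mulr_ge0.
nra.
Qed.

Lemma ln_dpc_ratio {b r x : R} : 0 <= b -> 0 < r -> 0 <= x ->
  ln (dpc_num b r x / dpc_den b r x) = ln (1 + x * r) - dpc_loss b r x.
Proof.
by move=> b0 r0 x0; rewrite ln_div ?posrE ?dpc_num_gt0 ?dpc_den_gt0 // /dpc_loss; ring.
Qed.

Lemma dpc_lossE {b r x : R} : 0 <= b -> 0 < r -> 0 <= x ->
  dpc_loss b r x = ln (1 + dpc_excess b r x).
Proof.
move=> b0 r0 x0.
have num0 := dpc_num_gt0 b0 r0 x0; have den0 := dpc_den_gt0 b0 r0 x0.
have xr0 : 0 < 1 + x * r by rewrite ltr_pwDl // mulr_ge0 // ltW.
have key : (1 + x * r) * dpc_den b r x = dpc_num b r x + b * r ^+ 2 * (1 - x) ^+ 2.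
  by rewrite /dpc_num /dpc_den; ring.
rewrite /dpc_loss -lnM ?posrE // -ln_div ?posrE ?(mulr_gt0 xr0 den0) //.
rewrite key /dpc_excess.
by congr ln; field; rewrite gt_eqF.
Qed.

Lemma dpc_excess_ge0 {b r x : R} : 0 <= b -> 0 < r -> 0 <= x ->
  0 <= dpc_excess b r x.
Proof.
move=> b0 r0 x0; rewrite divr_ge0 ?(ltW (dpc_num_gt0 b0 r0 x0)) //.
by rewrite mulr_ge0 ?sqr_ge0 // mulr_ge0 ?sqr_ge0.
Qed.

Lemma dpc_loss_bounds {b r x : R} : 0 <= b -> 0 < r -> 0 <= x ->
  0 <= dpc_loss b r x <= dpc_excess b r x.
Proof.
move=> b0 r0 x0; have q0 := dpc_excess_ge0 b0 r0 x0.
rewrite dpc_lossE // ln_ge0 ?le_ln1Dx //=; lra.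
Qed.

Lemma dpc_excess_le {b r x : R} : 0 <= b -> 0 < r -> 0 <= x ->
  dpc_excess b r x <= b * (1 + x) * (r / (1 + r)).
Proof.
move=> b0 r0 x0; have num0 := dpc_num_gt0 b0 r0 x0; have r_ge0 := ltW r0.
have xr0 : 0 <= x * r by rewrite mulr_ge0.
have K1 : 1 + x * r <= (1 + b) * x * r + 1.
  have : 0 <= b * (x * r) by rewrite mulr_ge0.
  rewrite (_ : (1 + b) * x * r = x * r + b * (x * r)); [lra | ring].
have base : r * (1 - x) ^+ 2 <= (1 + x) * (1 + r) * (1 + x * r).
  rewrite -subr_ge0.
  have -> : (1 + x) * (1 + r) * (1 + x * r) - r * (1 - x) ^+ 2 =
            (1 + x) * (1 + x * r ^+ 2) + 4%:R * (r * x) by ring.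
  have : 0 <= x * r ^+ 2 by rewrite mulr_ge0 ?exprn_ge0.
  have : 0 <= r * x by rewrite mulr_ge0.
  nra.
rewrite /dpc_excess ler_pdivrMr //.
have -> : b * (1 + x) * (r / (1 + r)) * dpc_num b r x =
          b * (r * ((1 + x) * (1 + r) * ((1 + b) * x * r + 1))).
  by rewrite /dpc_num; field; rewrite gt_eqF //; lra.
rewrite (_ : b * r ^+ 2 * _ = b * (r * (r * (1 - x) ^+ 2))); last by ring.
rewrite ler_wpM2l // ler_wpM2l //; apply: le_trans base _.
by rewrite ler_wpM2l // mulr_ge0; lra.
Qed.

Lemma dpc_excess_le_inv {b r x : R} : 0 <= b -> 0 < r -> 0 < x ->
  dpc_excess b r x <= b * (1 - x) ^+ 2 / x / r.
Proof.
move=> b0 r0 x0; have num0 := dpc_num_gt0 b0 r0 (ltW x0).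
have xr0 : 0 < x * r by rewrite mulr_gt0.
rewrite -mulrA -invfM.
have -> : dpc_excess b r x = b * (1 - x) ^+ 2 * (r ^+ 2 / dpc_num b r x).
  by rewrite /dpc_excess; ring.
apply: ler_wpM2l; first by rewrite mulr_ge0 ?sqr_ge0.
rewrite ler_pdivrMr // mulrC ler_pdivlMr //.
apply: ler_pM; rewrite ?sqr_ge0 ?ltW //; first nra.
have : 0 <= b * (x * r) by rewrite mulr_ge0 // ltW.
rewrite (_ : (1 + b) * x * r = x * r + b * (x * r)); [lra | ring].
Qed.

Lemma dpc_excess_le_sqr {b r x : R} : 0 <= b -> 0 < r -> 0 <= x ->
  dpc_excess b r x <= b * (1 - x) ^+ 2 * r ^+ 2.
Proof.
move=> b0 r0 x0; rewrite /dpc_excess ler_pdivrMr ?dpc_num_gt0 //.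
rewrite (_ : b * r ^+ 2 * _ = b * (1 - x) ^+ 2 * r ^+ 2 * 1); last by ring.
by rewrite ler_wpM2l ?dpc_num_ge1 // mulr_ge0 ?sqr_ge0 // mulr_ge0 ?sqr_ge0.
Qed.

Lemma dpc_loss_norm_le {b r x : R} : 0 <= b -> 0 < r -> 0 <= x ->
  `|dpc_loss b r x| <= b * (1 + x).
Proof.
move=> b0 r0 x0; have /andP[loss_ge0 loss_le] := dpc_loss_bounds b0 r0 x0.
rewrite ger0_norm //; apply: le_trans loss_le (le_trans (dpc_excess_le b0 r0 x0) _).
apply: ler_piMr; first by rewrite mulr_ge0 //; lra.
by rewrite ler_pdivrMr ?mul1r; lra.
Qed.

Lemma dpc_loss_div_norm_le {b r x : R} : 0 <= b -> 0 < r -> 0 <= x ->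
  `|dpc_loss b r x / r| <= b * (1 + x).
Proof.
move=> b0 r0 x0; have /andP[loss_ge0 loss_le] := dpc_loss_bounds b0 r0 x0.
rewrite ger0_norm ?divr_ge0 ?(ltW r0) // ler_pdivrMr //.
apply: le_trans loss_le (le_trans (dpc_excess_le b0 r0 x0) _).
apply: ler_wpM2l; first by rewrite mulr_ge0 //; lra.
by rewrite ler_pdivrMr; nra.
Qed.

End dpc_loss.

Section pointwise_limits.
Context {R : realType}.
Implicit Types b x : R.

Lemma cvg_at_right0_id : r @[r --> (0 : R)^'+] --> 0.
Proof. exact: cvg_at_right_filter cvg_id. Qed.

Lemma cvgy_inv : r^-1 @[r --> +oo] --> (0 : R).
Proof.
by apply/gtr0_cvgV0; [exact: nbhs_pinfty_gt | exact: cvg_id].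
Qed.

Lemma ln1Dx_div_cvg0 x : 0 <= x -> ln (1 + x * r) / r @[r --> 0^'+] --> x.
Proof.
move=> x0; apply: (@squeeze_cvgr _ _ _ _ (fun r => x - x ^+ 2 * r) (cst x)).
- near=> r; have r0 : 0 < r by near: r; exact: nbhs_right_gt.
  have xr0 : 0 <= x * r by rewrite mulr_ge0 // ltW.
  rewrite ler_pdivlMr // ler_pdivrMr // le_ln1Dx ?andbT; last lra.
  by rewrite (_ : (x - x ^+ 2 * r) * r = x * r - (x * r) ^+ 2) ?ln1Dx_ge //; ring.
- rewrite -[X in _ --> X]subr0 -[X in _ --> _ - X](mulr0 (x ^+ 2)).
  by apply: cvgB; [exact: cvg_cst | exact: cvgMl_tmp cvg_at_right0_id].
- exact: cvg_cst.
Unshelve. all: by end_near.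
Qed.

Lemma dpc_loss_cvgy b x : 0 <= b -> 0 < x -> dpc_loss b r x @[r --> +oo] --> 0.
Proof.
move=> b0 x0; pose c := b * (1 - x) ^+ 2 / x.
apply: (@squeeze_cvgr _ _ _ _ (cst 0) (fun r => c * r^-1)).
- near=> r; have r0 : 0 < r by near: r; exact: nbhs_pinfty_gt.
  have /andP[-> loss_le] := dpc_loss_bounds b0 r0 (ltW x0).
  exact: le_trans loss_le (dpc_excess_le_inv b0 r0 x0).
- exact: cvg_cst.
- by rewrite -(mulr0 c); apply: cvgMl_tmp cvgy_inv.
Unshelve. all: by end_near.
Qed.

Lemma dpc_loss_div_cvg0 b x : 0 <= b -> 0 <= x -> dpc_loss b r x / r @[r --> 0^'+] --> 0.
Proof.
move=> b0 x0; pose c := b * (1 - x) ^+ 2.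
apply: (@squeeze_cvgr _ _ _ _ (cst 0) (fun r => c * r)).
- near=> r; have r0 : 0 < r by near: r; exact: nbhs_right_gt.
  have /andP[loss_ge0 loss_le] := dpc_loss_bounds b0 r0 x0.
  rewrite /= divr_ge0 ?(ltW r0) //= ler_pdivrMr // -mulrA -expr2.
  exact: le_trans loss_le (dpc_excess_le_sqr b0 r0 x0).
- exact: cvg_cst.
- by rewrite -[X in _ --> X](mulr0 c); apply: cvgMl_tmp cvg_at_right0_id.
Unshelve. all: by end_near.
Qed.

Lemma measurable_ln1Dx r : measurable_fun setT (fun x : R => ln (1 + x * r)).
Proof.
by apply: measurableT_comp => //; apply: measurable_funD => //; apply: measurable_funM.
Qed.

Lemma measurable_dpc_loss b r : measurable_fun setT (dpc_loss b r).
Proof.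
rewrite /dpc_loss /dpc_den /dpc_num.
apply: measurable_funB; first apply: measurable_funD; first exact: measurable_ln1Dx.
all: apply: measurableT_comp => //.
  do 2?apply: measurable_funD => //.
  by apply: measurable_funM => //; apply: measurable_funD.
by apply: measurable_funM => //; apply: measurable_funD => //; do ?apply: measurable_funM.
Qed.

End pointwise_limits.

Section Rintegral_dominated_convergence.
Context {d} {T : measurableType d} {R : realType} {mu : {measure set T -> \bar R}}.
Context {g : T -> R} (g_integrable : mu.-integrable setT (EFin \o g)).

Lemma Rintegral_dominated_cvg (F : (T -> R)^nat) (G : T -> R) :
  (forall n, measurable_fun setT (F n)) -> measurable_fun setT G ->
  {ae mu, forall t, F n t @[n --> \oo] --> G t} ->
  (forall n t, `|F n t| <= g t) ->
  \int[mu]_t F n t @[n --> \oo] --> \int[mu]_t G t.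
Proof.
move=> mF mG FG Fg.
have [|||||iG _] := @dominated_convergence _ _ _ mu setT measurableT
  (fun n t => (F n t)%:E) (EFin \o G) (EFin \o g).
- by move=> n; exact/measurable_EFinP.
- exact/measurable_EFinP.
- apply: filterS FG => t FGt _.
  by apply/fine_cvgP; split; [exact: nearW | exact: FGt].
- exact: g_integrable.
- by apply: aeW => t n _ /=; rewrite lee_fin.
rewrite -(fineK (integrable_fin_num measurableT iG)) => /fine_cvg.
exact.
Qed.

Lemma Rintegral_cvgy (F : R -> T -> R) (G : T -> R) :
  (forall r, measurable_fun setT (F r)) -> measurable_fun setT G ->
  {ae mu, forall t, F r t @[r --> +oo] --> G t} ->
  (forall r t, 1 <= r -> `|F r t| <= g t) ->
  \int[mu]_t F r t @[r --> +oo] --> \int[mu]_t G t.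
Proof.
move=> mF mG FG Fg; apply/cvg_pinftyP => u u_cvgy.
pose v n := Num.max (u n) 1.
have v_ge1 n : 1 <= v n by rewrite le_max lexx orbT.
have v_cvgy : v n @[n --> \oo] --> +oo.
  by apply: ger_cvgy u_cvgy; apply: nearW => n; rewrite le_max lexx.
have v_u : \forall n \near \oo, \int[mu]_t F (v n) t = \int[mu]_t F (u n) t.
  move/cvgryPge : u_cvgy => /(_ 1); apply: filterS => n /max_idPl u_max.
  by rewrite /v u_max.
apply: cvg_trans (near_eq_cvg v_u) _.
apply: (@Rintegral_dominated_cvg (fun n => F (v n))) => //.
  by apply: filterS FG => t /cvg_pinftyP; apply.
by move=> n t; exact: Fg.
Qed.

Lemma Rintegral_cvg0r (F : R -> T -> R) (G : T -> R) :
  (forall r, measurable_fun setT (F r)) -> measurable_fun setT G ->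
  {ae mu, forall t, F r t @[r --> 0^'+] --> G t} ->
  (forall r t, 0 < r -> `|F r t| <= g t) ->
  \int[mu]_t F r t @[r --> 0^'+] --> \int[mu]_t G t.
Proof.
move=> mF mG FG Fg; apply/cvg_at_rightP => u [u_gt0 u_cvg0].
apply: (@Rintegral_dominated_cvg (fun n => F (u n))) => //.
  by apply: filterS FG => t /cvg_at_rightP; apply.
by move=> n t; exact: Fg.
Qed.

Lemma Rintegral0 (D : set T) : \int[mu]_(t in D) (0 : R) = 0.
Proof. by rewrite /Rintegral integral0. Qed.

End Rintegral_dominated_convergence.

Lemma has_pdf_ae_neq {d} {T : measurableType d} {R : realType}
    {P : probability T R} {X : {RV P >-> R}} (a : R) :
  has_pdf X -> {ae P, forall t, X t != a}.
Proof.
move=> [f [_ [_ Xf]]]; exists (X @^-1` [set a]); split.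
- exact: measurable_funPTI (measurable_set1 a).
- by have := Xf _ (measurable_set1 a); rewrite integral_set1.
- by move=> t /= /negP; rewrite negbK => /eqP.
Qed.

Section fading.
Context {d} {T : measurableType d} {R : realType} {P : probability T R}
  {A : {RV P >-> R}} (A_ge0 : forall t, 0 <= A t) (EA : ('E_P[A] = 1)%E).

Lemma integrable_fading_affine (c : R) :
  P.-integrable setT (EFin \o (fun t => c * (1 + A t))).
Proof.
have iA : P.-integrable setT (EFin \o A).
  apply/integrableP; split; first exact/measurable_EFinP.
  under eq_integral => t _ do rewrite /= ger0_norm //.
  by move: EA; rewrite unlock => ->; exact: ltry.
have := integrableZl measurableT c
  (integrableD measurableT (finite_measure_integrable_cst P 1 measurableT) iA).
by apply: eq_integrable => // t _ /=; rewrite EFinM EFinD.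
Qed.

Lemma integrable_comp_fading (f : R -> R) (c : R) : measurable_fun setT f ->
  (forall x, 0 <= x -> `|f x| <= c * (1 + x)) ->
  P.-integrable setT (EFin \o (f \o A)).
Proof.
move=> mf f_le; apply: le_integrable (integrable_fading_affine c) => //.
  exact/measurable_EFinP/measurableT_comp.
move=> t _ /=; rewrite lee_fin (ger0_norm (le_trans _ (f_le _ (A_ge0 t)))) //.
exact: f_le.
Qed.

Lemma integrable_ln1Dx_fading r : 0 < r ->
  P.-integrable setT (EFin \o (fun t => ln (1 + A t * r))).
Proof.
move=> r0; apply: (integrable_comp_fading _ r (measurable_ln1Dx r)) => x x0.
exact: ln1Dx_norm_le.
Qed.

Lemma integrable_dpc_loss_fading b r : 0 <= b -> 0 < r ->
  P.-integrable setT (EFin \o (fun t => dpc_loss b r (A t))).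
Proof.
move=> b0 r0.
apply: (integrable_comp_fading _ b (measurable_dpc_loss b r)) => x x0.
exact: dpc_loss_norm_le.
Qed.

Lemma cap_knownE r : cap_known P A r = \int[P]_t ln (1 + A t * r).
Proof. by rewrite /cap_known unlock. Qed.

Lemma dpc_rateE b r : 0 <= b -> 0 < r ->
  dpc_rate P A b r = cap_known P A r - \int[P]_t dpc_loss b r (A t).
Proof.
move=> b0 r0; rewrite cap_knownE -RintegralB //; last 2 first.
- exact: integrable_ln1Dx_fading.
- exact: integrable_dpc_loss_fading.
rewrite /dpc_rate unlock; apply: eq_Rintegral => t _.
exact: ln_dpc_ratio.
Qed.

Lemma Rintegral_fading : \int[P]_t A t = 1.
Proof. by rewrite /Rintegral; move: EA; rewrite unlock => ->. Qed.

Lemma dpc_loss_mean_cvgy b : 0 <= b -> has_pdf A ->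
  \int[P]_t dpc_loss b r (A t) @[r --> +oo] --> 0.
Proof.
move=> b0 pdfA; rewrite -[X in _ --> X](Rintegral0 (mu := P) setT).
apply: (Rintegral_cvgy (integrable_fading_affine b)) => //.
- by move=> r; apply: measurableT_comp (measurable_dpc_loss b r) _.
- apply: filterS (has_pdf_ae_neq 0 pdfA) => t At0.
  by apply: dpc_loss_cvgy => //; rewrite lt_neqAle eq_sym At0 A_ge0.
- by move=> r t r1; apply: dpc_loss_norm_le => //; lra.
Qed.

Lemma cap_known_div_cvg0 : cap_known P A r / r @[r --> 0^'+] --> (1 : R).
Proof.
have e : \forall r \near 0^'+, \int[P]_t (ln (1 + A t * r) / r) = cap_known P A r / r.
  near=> r; have r0 : 0 < r by near: r; exact: nbhs_right_gt.
  by rewrite cap_knownE RintegralZr // integrable_ln1Dx_fading.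
rewrite -[X in _ --> X]Rintegral_fading; apply: cvg_trans (near_eq_cvg e) _.
apply: (Rintegral_cvg0r (integrable_fading_affine 1)) => //.
- move=> r; apply: measurable_funM => //.
  exact: measurableT_comp (measurable_ln1Dx r) _.
- by apply: aeW => t; exact: ln1Dx_div_cvg0.
- by move=> r t r0; rewrite mul1r ln1Dx_div_norm_le.
Unshelve. all: by end_near.
Qed.

Lemma dpc_loss_mean_div_cvg0 b : 0 <= b ->
  (\int[P]_t dpc_loss b r (A t)) / r @[r --> 0^'+] --> 0.
Proof.
move=> b0.
have e : \forall r \near 0^'+,
    \int[P]_t (dpc_loss b r (A t) / r) = (\int[P]_t dpc_loss b r (A t)) / r.
  near=> r; have r0 : 0 < r by near: r; exact: nbhs_right_gt.
  by rewrite RintegralZr // integrable_dpc_loss_fading.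
rewrite -[X in _ --> X](Rintegral0 (mu := P) setT); apply: cvg_trans (near_eq_cvg e) _.
apply: (Rintegral_cvg0r (integrable_fading_affine b)) => //.
- move=> r; apply: measurable_funM => //.
  exact: measurableT_comp (measurable_dpc_loss b r) _.
- by apply: aeW => t; exact: dpc_loss_div_cvg0.
- by move=> r t r0; exact: dpc_loss_div_norm_le.
Unshelve. all: by end_near.
Qed.

Lemma dpc_rate_div_cvg0 b : 0 <= b -> dpc_rate P A b r / r @[r --> 0^'+] --> (1 : R).
Proof.
move=> b0.
have e : \forall r \near 0^'+,
    cap_known P A r / r - (\int[P]_t dpc_loss b r (A t)) / r = dpc_rate P A b r / r.
  near=> r; have r0 : 0 < r by near: r; exact: nbhs_right_gt.
  by rewrite dpc_rateE // mulrBl.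
rewrite -[X in _ --> X]subr0; apply: cvg_trans (near_eq_cvg e) _.
by apply: cvgB; [exact: cap_known_div_cvg0 | exact: dpc_loss_mean_div_cvg0].
Unshelve. all: by end_near.
Qed.

End fading.

Theorem mainTheorem1 (d : measure_display) (T : measurableType d) (R : realType)
    (P : probability T R) (A : {RV P >-> R}) (beta : R) :
  (forall t, 0 <= A t) ->
  has_pdf A ->
  ('E_P[A] = 1)%E ->
  0 <= beta ->
  (cap_known P A rho - dpc_rate P A beta rho @[rho --> +oo] --> (0 : R)) /\
  (dpc_rate P A beta rho / cap_known P A rho @[rho --> 0^'+] --> (1 : R)).
Proof.
move=> A_ge0 pdfA EA beta_ge0; split.
- have gap : \forall r \near +oo,
      \int[P]_t dpc_loss beta r (A t) = cap_known P A r - dpc_rate P A beta r.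
    near=> r; have r0 : 0 < r by near: r; exact: nbhs_pinfty_gt.
    by rewrite (dpc_rateE A_ge0 EA) // opprB addrC subrK.
  exact: cvg_trans (near_eq_cvg gap) (dpc_loss_mean_cvgy A_ge0 EA _ beta_ge0 pdfA).
- have ratio : \forall r \near 0^'+,
      (dpc_rate P A beta r / r) / (cap_known P A r / r) =
      dpc_rate P A beta r / cap_known P A r.
    near=> r; have r0 : 0 < r by near: r; exact: nbhs_right_gt.
    by rewrite invf_div mulrA divfK // gt_eqF.
  have -> : (1 : R) = 1 * 1^-1 by rewrite invr1 mulr1.
  apply: cvg_trans (near_eq_cvg ratio) _.
  apply: cvgM; first exact: dpc_rate_div_cvg0.
  by apply: cvgV; [exact: oner_neq0 | exact: cap_known_div_cvg0].
Unshelve. all: by end_near.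
Qed.
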